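(* Let $V$ be an $n$-dimensional complex vector space with orthonormal basis $e_1,\ldots,e_n$ for a nondegenerate symmetric bilinear form, let $a_{ij}=e_i\wedge e_j\in\Lambda_2(V)$, and $A=(a_{ij})_{1\le i,j\le n}\in\operatorname{Mat}_{n,n}(\Lambda(\Lambda_2(V)))$. Then for $l\ge 1$ we have $\operatorname{tr}(A^l)=0$ unless $l\equiv 3\pmod 4$.
   Context: $\Lambda(\Lambda_2(V))$ is the exterior algebra on $\Lambda_2(V)$; its products are exterior products, and matrix products are taken with entries multiplied in the order written. *)

From HB Require Import structures.
From mathcomp Require Import all_boot all_order all_algebra all_field.
Set Implicit Arguments. Unset Strict Implicit. Unset Printing Implicit Defensive.
Import GRing.Theory.
Local Open Scope ring_scope.

(* V = C^n with its standard (orthonormal) basis e_0..e_(n-1).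
   Basis of Lambda_2(V): e_i /\ e_j for i < j, indexed by [pair2 n]. *)
Definition pair2 (n : nat) := {p : 'I_n * 'I_n | (p.1 < p.2)%N}.

Definition pord n (p q : pair2 n) : bool := (enum_rank p < enum_rank q)%N.

(* The exterior algebra Lambda(Lambda_2(V)) over C (= algC): an element is the
   family of its coordinates on the basis monomials w_S = w_{s1} /\ ... /\ w_{sk},
   S = {s1 < ... < sk} a subset of the basis of Lambda_2(V). *)
Definition ext (n : nat) := {ffun {set pair2 n} -> algC}.

(* sign of the reordering of w_A /\ w_B into w_(A u B), A, B disjoint *)
Definition ext_sign n (A B : {set pair2 n}) : algC :=
  (-1) ^+ #|[set pq : pair2 n * pair2 n |
               [&& pq.1 \in A, pq.2 \in B & pord pq.2 pq.1]]|.

Definition ext_mul n (f g : ext n) : ext n :=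
  [ffun S : {set pair2 n} =>
     \sum_(A : {set pair2 n})
       \sum_(B : {set pair2 n} | (A :|: B == S) && [disjoint A & B])
         ext_sign A B * f A * g B].

Definition ext_gen n (p : pair2 n) : ext n :=
  [ffun S : {set pair2 n} => (S == [set p])%:R].

Definition a_entry n (i j : 'I_n) : ext n :=
  match ltnP i j with
  | LtnNotGeq h => ext_gen (exist _ (i, j) h)
  | GeqNotLtn _ =>
      match ltnP j i with
      | LtnNotGeq h' => - ext_gen (exist _ (j, i) h')
      | GeqNotLtn _ => 0
      end
  end.

Definition Amx n : 'M[ext n]_n := \matrix_(i, j) a_entry i j.

Definition ext_mxmul n (M N : 'M[ext n]_n) : 'M[ext n]_n :=
  \matrix_(i, j) \sum_(k < n) ext_mul (M i k) (N k j).

(* ext_mxpowS M k = M^(k+1) = (...((M * M) * M) ... ) * M *)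
Fixpoint ext_mxpowS n (M : 'M[ext n]_n) (k : nat) : 'M[ext n]_n :=
  match k with
  | O => M
  | k'.+1 => ext_mxmul (ext_mxpowS M k') M
  end.

Definition ext_tr n (M : 'M[ext n]_n) : ext n := \sum_(i < n) M i i.

(* The generators a_ij have degree one in the exterior algebra, so entries of
   degrees p and q supercommute with sign (-1)^(pq).  For matrices with
   homogeneous entries this gives (XY)^T = (-1)^(pq) Y^T X^T and
   tr(XY) = (-1)^(pq) tr(YX).  Since A^T = -A, induction yields
   (A^l)^T = (-1)^(l(l+1)/2) A^l, so tr(A^l) = -tr(A^l) when l = 1, 2 (mod 4);
   and tr(A^l) = tr(A^(l-1) A) = (-1)^(l-1) tr(A^l) disposes of even l. *)

From HB Require Import structures.
From mathcomp Require Import all_boot all_order all_algebra all_field zify.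
Set Implicit Arguments.
Unset Strict Implicit.
Unset Printing Implicit Defensive.
Import GRing.Theory Num.Theory.
Local Open Scope ring_scope.

HB.instance Definition _ (n : nat) :=
  GRing.Lmodule.copy (ext n) {ffun {set pair2 n} -> algC^o}.

Section DisjointUnion.
Variable T : finType.
Implicit Types A B C : {set T}.

Lemma disjoint_setUl A B C :
  [disjoint A :|: B & C] = [disjoint A & C] && [disjoint B & C].
Proof. by rewrite -!setI_eq0 setIUl setU_eq0. Qed.

Lemma disjoint_setUr A B C :
  [disjoint A & B :|: C] = [disjoint A & B] && [disjoint A & C].
Proof. by rewrite -!setI_eq0 setIUr setU_eq0. Qed.

Lemma big_setU_disjoint R (idx : R) (op : Monoid.com_law idx) (F : T -> R) A B :
  [disjoint A & B] ->
  \big[op/idx]_(x in A :|: B) F x =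
    op (\big[op/idx]_(x in A) F x) (\big[op/idx]_(x in B) F x).
Proof. by move=> dAB; rewrite -bigU //; apply: eq_bigl => x; rewrite inE. Qed.

End DisjointUnion.

Section ExtSign.
Variable n : nat.
Implicit Types A B C : {set pair2 n}.

Definition ext_inversions A B : nat :=
  #|[set pq : pair2 n * pair2 n | [&& pq.1 \in A, pq.2 \in B & pord pq.2 pq.1]]|.

Lemma ext_signE A B : ext_sign A B = (-1) ^+ ext_inversions A B.
Proof. by []. Qed.

Lemma ext_inversions_sum A B :
  ext_inversions A B = (\sum_(a in A) \sum_(b in B) pord b a)%N.
Proof.
rewrite /ext_inversions -sum1_card (eq_bigl _ _ (fun pq => in_set _ pq)).
rewrite -(pair_big_dep (mem A) (fun a b => (b \in B) && pord b a) (fun _ _ => 1%N)).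
apply: eq_bigr => a _; rewrite big_mkcondr.
by apply: eq_bigr => b _; case: pord.
Qed.

Lemma ext_inversionsUl A B C : [disjoint A & B] ->
  ext_inversions (A :|: B) C = (ext_inversions A C + ext_inversions B C)%N.
Proof. by move=> dAB; rewrite !ext_inversions_sum big_setU_disjoint. Qed.

Lemma ext_inversionsUr A B C : [disjoint B & C] ->
  ext_inversions A (B :|: C) = (ext_inversions A B + ext_inversions A C)%N.
Proof.
move=> dBC; rewrite !ext_inversions_sum -big_split.
by apply: eq_bigr => a _; rewrite big_setU_disjoint.
Qed.

Lemma pord_total (a b : pair2 n) : a != b -> (pord b a + pord a b)%N = 1%N.
Proof.
rewrite -(inj_eq enum_rank_inj) /pord -val_eqE /=.
by case: ltngtP.
Qed.

Lemma ext_inversionsC A B : [disjoint A & B] ->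
  (ext_inversions A B + ext_inversions B A)%N = (#|A| * #|B|)%N.
Proof.
move=> dAB; rewrite !ext_inversions_sum [X in (_ + X)%N]exchange_big -big_split.
rewrite -sum_nat_const; apply: eq_bigr => a Aa; rewrite -big_split -sum1_card.
apply: eq_bigr => b Bb; apply: pord_total; apply: contraTneq Bb => <-.
by rewrite (disjointFr dAB).
Qed.

Lemma ext_sign0l B : ext_sign set0 B = 1.
Proof. by rewrite ext_signE ext_inversions_sum big_set0. Qed.

Lemma ext_sign0r A : ext_sign A set0 = 1.
Proof.
by rewrite ext_signE ext_inversions_sum big1 // => a _; rewrite big_set0.
Qed.

Lemma ext_signA A B C :
  [disjoint A & B] -> [disjoint A & C] -> [disjoint B & C] ->
  ext_sign A B * ext_sign (A :|: B) C = ext_sign B C * ext_sign A (B :|: C).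
Proof.
move=> dAB dAC dBC; rewrite !ext_signE -!exprD ext_inversionsUl ?ext_inversionsUr //.
by rewrite addnA [in LHS]addnC.
Qed.

Lemma ext_signC A B : [disjoint A & B] ->
  ext_sign A B = (-1) ^+ (#|A| * #|B|) * ext_sign B A.
Proof.
move=> dAB; rewrite !ext_signE -ext_inversionsC // -exprD -addnA addnn.
by rewrite -mul2n exprD exprM sqrrN !expr1n mulr1.
Qed.

End ExtSign.

Section ExtRing.
Variable n : nat.
Implicit Types (A B C S : {set pair2 n}) (f g h : ext n).

Definition ext_basis S : ext n := [ffun X => (X == S)%:R].

Lemma ext_scaleE (c : algC) f S : (c *: f) S = c * f S.
Proof. by rewrite ffunE. Qed.

Lemma ext_mulE f g S : ext_mul f g S =
  \sum_A \sum_(B | (A :|: B == S) && [disjoint A & B]) ext_sign A B * f A * g B.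
Proof. by rewrite ffunE. Qed.

Lemma ext_expansion f : f = \sum_A f A *: ext_basis A.
Proof.
apply/ffunP => S; rewrite sum_ffunE (bigD1 S) //= big1 => [|A /negbTE nAS].
  by rewrite ext_scaleE !ffunE eqxx mulr1 addr0.
by rewrite ext_scaleE !ffunE eq_sym nAS mulr0.
Qed.

Lemma ext_mulDl f1 f2 g : ext_mul (f1 + f2) g = ext_mul f1 g + ext_mul f2 g.
Proof.
apply/ffunP => S; rewrite !ffunE -big_split; apply: eq_bigr => A _.
by rewrite -big_split; apply: eq_bigr => B _; rewrite ffunE mulrDr mulrDl.
Qed.

Lemma ext_mulDr f g1 g2 : ext_mul f (g1 + g2) = ext_mul f g1 + ext_mul f g2.
Proof.
apply/ffunP => S; rewrite !ffunE -big_split; apply: eq_bigr => A _.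
by rewrite -big_split; apply: eq_bigr => B _; rewrite ffunE mulrDr.
Qed.

Lemma ext_mulZl (c : algC) f g : ext_mul (c *: f) g = c *: ext_mul f g.
Proof.
apply/ffunP => S; rewrite ext_scaleE !ffunE mulr_sumr; apply: eq_bigr => A _.
by rewrite mulr_sumr; apply: eq_bigr => B _; rewrite ext_scaleE mulrCA !mulrA.
Qed.

Lemma ext_mulZr (c : algC) f g : ext_mul f (c *: g) = c *: ext_mul f g.
Proof.
apply/ffunP => S; rewrite ext_scaleE !ffunE mulr_sumr; apply: eq_bigr => A _.
by rewrite mulr_sumr; apply: eq_bigr => B _; rewrite ext_scaleE mulrCA.
Qed.

Lemma ext_mul0l g : ext_mul 0 g = 0.
Proof. by apply: (addrI (ext_mul 0 g)); rewrite -ext_mulDl !addr0. Qed.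

Lemma ext_mul0r f : ext_mul f 0 = 0.
Proof. by apply: (addrI (ext_mul f 0)); rewrite -ext_mulDr !addr0. Qed.

Lemma ext_mul_suml I (r : seq I) (P : pred I) (F : I -> ext n) g :
  ext_mul (\sum_(i <- r | P i) F i) g = \sum_(i <- r | P i) ext_mul (F i) g.
Proof. by elim/big_rec2: _ => [|i h1 h2 _ <-]; rewrite ?ext_mul0l ?ext_mulDl. Qed.

Lemma ext_mul_sumr I (r : seq I) (P : pred I) (F : I -> ext n) f :
  ext_mul f (\sum_(i <- r | P i) F i) = \sum_(i <- r | P i) ext_mul f (F i).
Proof. by elim/big_rec2: _ => [|i h1 h2 _ <-]; rewrite ?ext_mul0r ?ext_mulDr. Qed.

Lemma ext_mul_basis A B : ext_mul (ext_basis A) (ext_basis B) =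
  if [disjoint A & B] then ext_sign A B *: ext_basis (A :|: B) else 0.
Proof.
apply/ffunP => S; rewrite ext_mulE (bigD1 A) //= [X in _ + X]big1 => [|A' nA'A].
  rewrite addr0 big_mkcond (bigD1 B) //= [X in _ + X]big1 => [|B' nB'B].
    rewrite addr0 !ffunE !eqxx !mulr1 eq_sym.
    case: [disjoint A & B]; rewrite ?andbF ?andbT !ffunE //.
    by case: eqP; rewrite /GRing.scale /= ?mulr1 ?mulr0.
  by case: ifP; rewrite // !ffunE (negbTE nB'B) mulr0.
by rewrite big1 // => B' _; rewrite !ffunE (negbTE nA'A) mulr0 mul0r.
Qed.

Lemma ext_mul_basisA A B C :
  ext_mul (ext_mul (ext_basis A) (ext_basis B)) (ext_basis C) =
  ext_mul (ext_basis A) (ext_mul (ext_basis B) (ext_basis C)).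
Proof.
rewrite !ext_mul_basis.
case dAB: [disjoint A & B]; case dBC: [disjoint B & C];
  rewrite ?ext_mul0l ?ext_mul0r ?ext_mulZl ?ext_mulZr ?ext_mul_basis
    ?disjoint_setUl ?disjoint_setUr ?dAB ?dBC ?andbF ?andbT ?scaler0 //=.
case: ifP => dAC; last by rewrite !scaler0.
by rewrite !scalerA setUA ext_signA.
Qed.

Lemma ext_mul_sum2 (F G : {set pair2 n} -> ext n) :
  ext_mul (\sum_A F A) (\sum_B G B) = \sum_A \sum_B ext_mul (F A) (G B).
Proof. by rewrite ext_mul_suml; apply: eq_bigr => A _; rewrite ext_mul_sumr. Qed.

Lemma ext_mulA : associative (@ext_mul n).
Proof.
move=> f g h; rewrite (ext_expansion f) (ext_expansion g) (ext_expansion h).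
rewrite !ext_mul_sum2; apply: eq_bigr => A _.
under eq_bigr => B _ do rewrite ext_mul_sumr.
under [RHS]eq_bigr => C _ do rewrite ext_mul_suml.
rewrite [RHS]exchange_big; apply: eq_bigr => B _; apply: eq_bigr => C _.
by rewrite !(ext_mulZl, ext_mulZr) ext_mul_basisA !scalerA [in LHS]mulrC mulrA.
Qed.

Lemma ext_mul1l : left_id (ext_basis set0) (@ext_mul n).
Proof.
move=> f; rewrite {2}(ext_expansion f) {1}(ext_expansion f) ext_mul_sumr.
apply: eq_bigr => A _; rewrite ext_mulZr ext_mul_basis.
by rewrite -setI_eq0 set0I eqxx ext_sign0l set0U scale1r.
Qed.

Lemma ext_mul1r : right_id (ext_basis set0) (@ext_mul n).
Proof.
move=> f; rewrite {2}(ext_expansion f) {1}(ext_expansion f) ext_mul_suml.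
apply: eq_bigr => A _; rewrite ext_mulZl ext_mul_basis.
by rewrite -setI_eq0 setI0 eqxx ext_sign0r setU0 scale1r.
Qed.

Lemma ext_basis_neq0 S : ext_basis S != 0.
Proof. by apply/eqP => /ffunP/(_ S); rewrite !ffunE eqxx => /eqP; rewrite oner_eq0. Qed.

End ExtRing.

HB.instance Definition _ (n : nat) := GRing.Zmodule_isNzRing.Build (ext n)
  (@ext_mulA n) (@ext_mul1l n) (@ext_mul1r n) (@ext_mulDl n) (@ext_mulDr n)
  (@ext_basis_neq0 n set0).

HB.instance Definition _ (n : nat) := GRing.Lmodule_isLalgebra.Build algC (ext n)
  (fun c f g => esym (@ext_mulZl n c f g)).
HB.instance Definition _ (n : nat) := GRing.Lalgebra_isAlgebra.Build algC (ext n)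
  (fun c f g => esym (@ext_mulZr n c f g)).

Section GradedCommutativity.
Variable n : nat.
Implicit Types (A B S : {set pair2 n}) (f g : ext n).

Lemma ext_mul_expansion f g :
  f * g = \sum_A \sum_B (f A * g B) *: (ext_basis A * ext_basis B).
Proof.
rewrite {1}(ext_expansion f) mulr_suml; apply: eq_bigr => A _.
rewrite {1}(ext_expansion g) mulr_sumr; apply: eq_bigr => B _.
by rewrite -scalerAl -scalerAr scalerA.
Qed.

Lemma ext_scale_sign k f : ((-1) ^+ k : algC) *: f = (-1) ^+ k * f.
Proof.
rewrite -mulr_algl -!(signr_odd _ k) scaler_sign mulr_sign.
by case: odd; rewrite ?mulN1r ?mul1r.
Qed.

Lemma ext_mul_basisC A B :
  ext_basis A * ext_basis B = (-1) ^+ (#|A| * #|B|) * (ext_basis B * ext_basis A).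
Proof.
rewrite [LHS]ext_mul_basis [_ * ext_basis A]ext_mul_basis disjoint_sym.
case: ifP => dBA; last by rewrite mulr0.
rewrite -ext_scale_sign scalerA -ext_signC 1?disjoint_sym //.
by rewrite setUC.
Qed.

Definition ext_homogeneous k f := forall S, #|S| != k -> f S = 0.

Lemma ext_homogeneous_mulC p q f g : ext_homogeneous p f -> ext_homogeneous q g ->
  f * g = (-1) ^+ (p * q) * (g * f).
Proof.
move=> hf hg; rewrite (ext_mul_expansion f) (ext_mul_expansion g) exchange_big mulr_sumr.
apply: eq_bigr => B _; rewrite mulr_sumr; apply: eq_bigr => A _.
have [/eqP pA|/hf->] := boolP (#|A| == p); last by rewrite !(mul0r, mulr0, scale0r).
have [/eqP qB|/hg->] := boolP (#|B| == q); last by rewrite !(mul0r, mulr0, scale0r).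
by rewrite ext_mul_basisC pA qB -scalerAr mulrC.
Qed.

Lemma ext_homogeneous_mul p q f g : ext_homogeneous p f -> ext_homogeneous q g ->
  ext_homogeneous (p + q) (f * g).
Proof.
move=> hf hg S nS; rewrite ext_mulE big1 // => A _.
rewrite big1 // => B /andP[/eqP AB dAB].
have [/eqP pA|/hf->] := boolP (#|A| == p); last by rewrite mulr0 mul0r.
have [/eqP qB|/hg->] := boolP (#|B| == q); last by rewrite mulr0.
by move: nS; rewrite -AB cardsU (disjoint_setI0 dAB) cards0 subn0 pA qB eqxx.
Qed.

Lemma ext_homogeneous0 k : ext_homogeneous k 0.
Proof. by move=> S _; rewrite ffunE. Qed.

Lemma ext_homogeneousD k f g :
  ext_homogeneous k f -> ext_homogeneous k g -> ext_homogeneous k (f + g).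
Proof. by move=> hf hg S nS; rewrite ffunE hf ?hg ?addr0. Qed.

Lemma ext_homogeneousN k f : ext_homogeneous k f -> ext_homogeneous k (- f).
Proof. by move=> hf S nS; rewrite ffunE hf ?oppr0. Qed.

Lemma ext_homogeneous_sum k I (r : seq I) (P : pred I) (F : I -> ext n) :
  (forall i, P i -> ext_homogeneous k (F i)) ->
  ext_homogeneous k (\sum_(i <- r | P i) F i).
Proof.
move=> hF; elim/big_ind: _ => //; [exact: ext_homogeneous0 | exact: ext_homogeneousD].
Qed.

Lemma ext_gen_homogeneous (p : pair2 n) : ext_homogeneous 1 (ext_gen p).
Proof. by move=> S; rewrite ffunE; case: (S =P [set p]) => [->|]; rewrite ?cards1. Qed.

End GradedCommutativity.

Section GradedMatrices.
Variable n : nat.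

Definition mx_homogeneous k m p (X : 'M[ext n]_(m, p)) :=
  forall i j, ext_homogeneous k (X i j).

Lemma mx_homogeneous_mul k l m p r (X : 'M[ext n]_(m, p)) (Y : 'M[ext n]_(p, r)) :
  mx_homogeneous k X -> mx_homogeneous l Y -> mx_homogeneous (k + l) (X *m Y).
Proof.
move=> hX hY i j; rewrite mxE; apply: ext_homogeneous_sum => t _.
exact: ext_homogeneous_mul.
Qed.

Lemma trmx_mul_homogeneous k l m p r (X : 'M[ext n]_(m, p)) (Y : 'M[ext n]_(p, r)) :
  mx_homogeneous k X -> mx_homogeneous l Y ->
  (X *m Y)^T = (-1) ^+ (k * l) *: (Y^T *m X^T).
Proof.
move=> hX hY; apply/matrixP => i j; rewrite !mxE mulr_sumr.
by apply: eq_bigr => t _; rewrite !mxE (ext_homogeneous_mulC (hX _ _) (hY _ _)).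
Qed.

Lemma mxtrace_mulC_homogeneous k l m p (X : 'M[ext n]_(m, p)) (Y : 'M[ext n]_(p, m)) :
  mx_homogeneous k X -> mx_homogeneous l Y ->
  \tr (X *m Y) = (-1) ^+ (k * l) * \tr (Y *m X).
Proof.
move=> hX hY; rewrite /mxtrace mulr_sumr.
under eq_bigr => i _ do rewrite mxE.
under [in RHS]eq_bigr => t _ do rewrite mxE mulr_sumr.
rewrite exchange_big; apply: eq_bigr => t _; apply: eq_bigr => i _.
exact: ext_homogeneous_mulC.
Qed.

Lemma mulmx_scale_sign k m p r (X : 'M[ext n]_(m, p)) (Y : 'M[ext n]_(p, r)) :
  X *m ((-1) ^+ k *: Y) = (-1) ^+ k *: (X *m Y).
Proof. by rewrite -(signr_odd _ k) !scaler_sign; case: odd; rewrite ?mulmxN. Qed.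

End GradedMatrices.

Section AntisymmetricMatrix.
Variable n : nat.
Local Notation A := (Amx n).

Lemma ext_mxmulE (M N : 'M[ext n]_n) : ext_mxmul M N = M *m N.
Proof. by apply/matrixP => i j; rewrite !mxE. Qed.

Lemma ext_trE (M : 'M[ext n]_n) : ext_tr M = \tr M.
Proof. by []. Qed.

Lemma ext_mxpowS_mulmx (M : 'M[ext n]_n) k : ext_mxpowS M k.+1 = ext_mxpowS M k *m M.
Proof. exact: ext_mxmulE. Qed.

Lemma mulmx_ext_mxpowS (M : 'M[ext n]_n) k : M *m ext_mxpowS M k = ext_mxpowS M k.+1.
Proof.
elim: k => [|k IHk]; first by rewrite ext_mxpowS_mulmx.
by rewrite ext_mxpowS_mulmx mulmxA IHk -ext_mxpowS_mulmx.
Qed.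

Lemma a_entryC (i j : 'I_n) : a_entry j i = - a_entry i j.
Proof.
rewrite /a_entry; case: (ltnP i j) => ij; case: (ltnP j i) => ji //.
- by have := ltn_trans ij ji; rewrite ltnn.
- by rewrite opprK.
- by rewrite oppr0.
Qed.

Lemma trmx_Amx : A^T = - A.
Proof. by apply/matrixP => i j; rewrite !mxE a_entryC. Qed.

Lemma Amx_homogeneous : mx_homogeneous 1 A.
Proof.
move=> i j; rewrite mxE /a_entry.
case: (ltnP i j) => ij; first exact: ext_gen_homogeneous.
case: (ltnP j i) => ji; first exact/ext_homogeneousN/ext_gen_homogeneous.
exact: ext_homogeneous0.
Qed.

Lemma ext_mxpowS_homogeneous k : mx_homogeneous k.+1 (ext_mxpowS A k).
Proof.
elim: k => [|k IHk]; first exact: Amx_homogeneous.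
by rewrite ext_mxpowS_mulmx -addn1; apply: mx_homogeneous_mul IHk Amx_homogeneous.
Qed.

Lemma trmx_ext_mxpowS k : (ext_mxpowS A k)^T = (-1) ^+ 'C(k.+2, 2) *: ext_mxpowS A k.
Proof.
elim: k => [|k IHk]; first by rewrite trmx_Amx binn expr1 scaleN1r.
rewrite ext_mxpowS_mulmx.
rewrite (trmx_mul_homogeneous (@ext_mxpowS_homogeneous k) Amx_homogeneous).
rewrite IHk trmx_Amx mulNmx mulmx_scale_sign mulmx_ext_mxpowS scalerN -scaleNr scalerA.
by rewrite -ext_mxpowS_mulmx muln1 -mulN1r -exprS -exprD [in RHS]binS bin1 addnC.
Qed.

Lemma ext_tr_mxpowS_sign k :
  ext_tr (ext_mxpowS A k) = (-1) ^+ 'C(k.+2, 2) * ext_tr (ext_mxpowS A k).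
Proof. by rewrite !ext_trE -mxtraceZ -trmx_ext_mxpowS mxtrace_tr. Qed.

Lemma ext_tr_mxpowS_cyclic k :
  ext_tr (ext_mxpowS A k.+1) = (-1) ^+ k.+1 * ext_tr (ext_mxpowS A k.+1).
Proof.
rewrite !ext_trE {1}ext_mxpowS_mulmx.
rewrite (mxtrace_mulC_homogeneous (@ext_mxpowS_homogeneous k) Amx_homogeneous).
by rewrite muln1 mulmx_ext_mxpowS.
Qed.

End AntisymmetricMatrix.

Lemma eqNv (R : numFieldType) (V : lmodType R) (v : V) : (- v == v) = (v == 0).
Proof.
by rewrite eq_sym -addr_eq0 -mulr2n -scaler_nat scaler_eq0 pnatr_eq0.
Qed.

Lemma odd_bin2_mod4 k : (k %% 4 = 0)%N -> odd 'C(k.+2, 2).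
Proof. rewrite bin2 /=; lia. Qed.

Theorem proposition4p4 (n l : nat) :
  (1 <= l)%N -> (l %% 4 != 3)%N ->
  ext_tr (ext_mxpowS (Amx n) l.-1) = 0.
Proof.
move=> l_gt0 l_mod4; apply/eqP; rewrite -eqNv; apply/eqP.
have signN (x : ext n) m : odd m -> (-1) ^+ m * x = - x.
  by move=> m_odd; rewrite -signr_odd m_odd mulN1r.
have [l_odd | l_even] := boolP (odd l).
  rewrite -(signN _ 'C(l.-1.+2, 2)); first exact/esym/ext_tr_mxpowS_sign.
  by apply: odd_bin2_mod4; lia.
case: l l_gt0 l_mod4 l_even => [|[|k]] // _ _ /negPn k_odd.
by rewrite -(signN _ k.+1); first exact/esym/ext_tr_mxpowS_cyclic.
Qed.
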